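(* In the setting below, the associator obtained by twisting the trivial associator of $H$ by $\mathbb J$, namely $\Phi:=(1\otimes\mathbb J)(\mathrm{id}\otimes\Delta)(\mathbb J)(\Delta\otimes\mathrm{id})(\mathbb J^{-1})(\mathbb J^{-1}\otimes1)$, is given by $$\Phi=\sum_{\beta,\gamma,\delta\in\mathbb{Z}_n^m}\Bigl(\prod_{i,j=1}^m q^{a_{ij}\beta_i((\gamma_j+\delta_j)'-\gamma_j-\delta_j)}\Bigr)\mathbf 1_\beta\otimes\mathbf 1_\gamma\otimes\mathbf 1_\delta,$$ where $\{\mathbf 1_\beta\mid\beta\in\mathbb{Z}_n^m\}$ are the primitive idempotents of the group algebra $\mathbb{C}[g_1^n,\dots,g_m^n]\cong\mathbb{C}[\mathbb{Z}_n^m]$ with $\mathbf 1_\beta g_i^n=q^{n\beta_i}\mathbf 1_\beta$, the components of $\beta,\gamma,\delta$ are regarded as integers in $\{0,\dots,n-1\}$, and $(\gamma_j+\delta_j)'$ is the remainder of $\gamma_j+\delta_j$ modulo $n$. In particular $\Phi\in A\otimes A\otimes A$.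
   Context: Setting: $n\ge2$, $q$ a primitive root of unity of order $n^2$, $m\ge1$; $H$ a finite dimensional Hopf algebra over $\mathbb{C}$ generated by grouplike $g_1,\dots,g_m$ and $e_1,\dots,e_m$ with $g_i^{n^2}=1$, $g_ig_j=g_jg_i$, $g_ie_jg_i^{-1}=q^{\delta_{ij}}e_j$, $\Delta(e_i)=e_i\otimes K_i+1\otimes e_i$, $K_i=\prod_jg_j^{a_{ij}}$, $a_{ij}\in\mathbb{Z}_{n^2}$; $H$ projects onto $\mathbb{C}[(\mathbb{Z}_{n^2})^m]$ via $g_i\mapsto g_i$, $e_i\mapsto0$. $A\subset H$ is the subalgebra generated by the $g_i^n$ and $e_i$. $\{1_\beta\mid\beta\in(\mathbb{Z}_{n^2})^m\}$ are the primitive idempotents of $\mathbb{C}[g_1,\dots,g_m]$ with $1_\beta g_i=q^{\beta_i}1_\beta$. For $z,y\in\mathbb{Z}_{n^2}$ represented in $\{0,\dots,n^2-1\}$, $c(z,y)=q^{-z(y-y')}$ with $y'$ the remainder of $y$ mod $n$, and $\mathbb J=\sum_{\beta,\gamma\in(\mathbb{Z}_{n^2})^m}\prod_{i,j}c(\beta_i,\gamma_j)^{a_{ij}}1_\beta\otimes1_\gamma$. *)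

From HB Require Import structures.
From mathcomp Require Import all_boot all_order all_algebra all_field.
Set Implicit Arguments. Unset Strict Implicit. Unset Printing Implicit Defensive.
Import GRing.Theory Num.Theory.
Local Open Scope ring_scope.

(* Group algebra C[T] of a finite abelian (additive) group T: an element
   sum_t x(t) t is represented by its coefficient function x. *)
Notation GA T := {ffun T -> algC}.

Definition gscale (T : finType) (c : algC) (x : GA T) : GA T :=
  [ffun t => c * x t].

(* C[T] (x) C[U] = C[T * U] via t (x) u |-> (t,u). *)
Definition tens2 (T U : finType) (x : GA T) (y : GA U) : GA (T * U)%type :=
  [ffun p => x p.1 * y p.2].
Definition tens3 (T U V : finType) (x : GA T) (y : GA U) (z : GA V) :
  GA (T * U * V)%type := [ffun p => x p.1.1 * y p.1.2 * z p.2].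

(* G = (Z_{n^2})^m; the element g : G stands for g_1^{g 1} ... g_m^{g m}. *)
Notation Grp m n := {ffun 'I_m -> 'Z_(n ^ 2)}.

Definition gmul2 (m n : nat) (x y : GA (Grp m n * Grp m n)%type) :
  GA (Grp m n * Grp m n)%type :=
  [ffun t : (Grp m n * Grp m n)%type =>
     \sum_(s : (Grp m n * Grp m n)%type) x s * y (t.1 - s.1, t.2 - s.2)].
Definition gone2 (m n : nat) : GA (Grp m n * Grp m n)%type :=
  [ffun t : (Grp m n * Grp m n)%type => ((t.1 == 0) && (t.2 == 0))%:R].
Definition gmul3 (m n : nat) (x y : GA (Grp m n * Grp m n * Grp m n)%type) :
  GA (Grp m n * Grp m n * Grp m n)%type :=
  [ffun t : (Grp m n * Grp m n * Grp m n)%type =>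
     \sum_(s : (Grp m n * Grp m n * Grp m n)%type)
        x s * y (t.1.1 - s.1.1, t.1.2 - s.1.2, t.2 - s.2)].

(* 1 (x) J, J (x) 1, (id (x) Delta)(J), (Delta (x) id)(J), with Delta g = g (x) g. *)
Definition one_tens (m n : nat) (J : GA (Grp m n * Grp m n)%type) :
  GA (Grp m n * Grp m n * Grp m n)%type :=
  [ffun p : (Grp m n * Grp m n * Grp m n)%type => (p.1.1 == 0)%:R * J (p.1.2, p.2)].
Definition tens_one (m n : nat) (J : GA (Grp m n * Grp m n)%type) :
  GA (Grp m n * Grp m n * Grp m n)%type :=
  [ffun p : (Grp m n * Grp m n * Grp m n)%type => (p.2 == 0)%:R * J (p.1.1, p.1.2)].
Definition id_Delta (m n : nat) (J : GA (Grp m n * Grp m n)%type) :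
  GA (Grp m n * Grp m n * Grp m n)%type :=
  [ffun p : (Grp m n * Grp m n * Grp m n)%type => (p.1.2 == p.2)%:R * J (p.1.1, p.1.2)].
Definition Delta_id (m n : nat) (J : GA (Grp m n * Grp m n)%type) :
  GA (Grp m n * Grp m n * Grp m n)%type :=
  [ffun p : (Grp m n * Grp m n * Grp m n)%type => (p.1.1 == p.1.2)%:R * J (p.1.1, p.2)].


Section Setting.
Variables (n m : nat) (q : algC) (a : 'I_m -> 'I_m -> 'I_(n ^ 2)).

(* primitive idempotent 1_beta of C[G], 1_beta g_i = q^{beta_i} 1_beta *)
Definition idem (b : Grp m n) : GA (Grp m n) :=
  [ffun g : Grp m n => ((n ^ 2) ^ m)%:R^-1 * \prod_(i < m) q ^- (b i * g i)%N].

Definition cfun (z y : nat) : algC := q ^- (z * (y - y %% n))%N.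

Definition Jcoef (b c : Grp m n) : algC :=
  \prod_(i < m) \prod_(j < m) cfun (b i) (c j) ^+ (a i j).

Definition JJ : GA (Grp m n * Grp m n)%type :=
  \sum_(b : Grp m n) \sum_(c : Grp m n) gscale (Jcoef b c) (tens2 (idem b) (idem c)).

(* primitive idempotent 1_beta (beta in Z_n^m, components in {0..n-1}) of
   C[g_1^n,...,g_m^n], with 1_beta g_i^n = q^{n beta_i} 1_beta *)
Definition sidem (b : {ffun 'I_m -> 'I_n}) : GA (Grp m n) :=
  [ffun g : Grp m n => if [forall i, (n %| g i)%N]
             then (n ^ m)%:R^-1 * \prod_(i < m) q ^- (b i * g i)%N
             else 0].

Definition PhiCoef (b c d : {ffun 'I_m -> 'I_n}) : algC :=
  \prod_(i < m) \prod_(j < m)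
     q ^ ((a i j)%:Z * (b i)%:Z
          * (((c j + d j) %% n)%:Z - (c j)%:Z - (d j)%:Z)).

Definition Phi (Jinv : GA (Grp m n * Grp m n)%type) : GA (Grp m n * Grp m n * Grp m n)%type :=
  gmul3 (gmul3 (gmul3 (one_tens JJ) (id_Delta JJ)) (Delta_id Jinv)) (tens_one Jinv).

(* a group element of G^3 lies in <g_i^n>^3 (hence its basis vector is in A(x)A(x)A) *)
Definition inA3 (t : (Grp m n * Grp m n * Grp m n)%type) : bool :=
  [forall i, (n %| t.1.1 i)%N && (n %| t.1.2 i)%N && (n %| t.2 i)%N].

End Setting.

From HB Require Import structures.
From mathcomp Require Import all_boot all_order all_algebra all_field.
From mathcomp Require Import ring zify.
Set Implicit Arguments. Unset Strict Implicit. Unset Printing Implicit Defensive.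
Import GRing.Theory Num.Theory.
Local Open Scope ring_scope.

(* Evaluate everything at the characters [chi b] of G = (Z_{n^2})^m.  This
   discrete Fourier transform turns convolution into pointwise products, the
   coproduct into addition of characters, JJ into its coefficients Jcoef, and
   the idempotent 1_beta of C[g_i^n] into the indicator of beta = b mod n.  So
   the transform of Phi at (b, c, d) is the coboundary
     J(c, d) J(b, c + d) / J(b + c, d) / J(b, c).
   Since c(z, y) = q^{-z n floor(y/n)}, everything cancels except the carry of
   c + d past a multiple of n, which contributes q^{-(b mod n) n carry}; this
   only depends on b, c, d mod n and is the transform of the claimed sum.
   Fourier inversion on G^3 concludes. *)

Lemma sum_expr_unity (R : idomainType) (w : R) k : (0 < k)%N -> w ^+ k = 1 ->
  \sum_(i < k) w ^+ i = if w == 1 then k%:R else 0.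
Proof.
move=> k_gt0 wk1; have [->|w_neq1] := eqVneq w 1.
  by rewrite (eq_bigr (fun=> 1)) ?sumr_const ?card_ord // => i _; rewrite expr1n.
apply/eqP; have := subrX1 w k; rewrite wk1 subrr => /esym/eqP.
by rewrite mulf_eq0 subr_eq0 (negbTE w_neq1).
Qed.

Lemma big_nat_dvdn (R : nmodType) d e (F : nat -> R) : (0 < e)%N ->
  \sum_(0 <= x < d * e | (e %| x)%N) F x = \sum_(0 <= k < d) F (k * e)%N.
Proof.
move=> e_gt0; elim: d => [|d IHd]; first by rewrite mul0n !big_geq.
rewrite mulSn addnC big_nat_recr //= (@big_cat_nat _ _ _ (d * e)%N) ?leq_addr //= IHd.
congr (_ + _); rewrite -(add0n (d * e)%N) big_addn add0n addKn big_ltn_cond //=.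
rewrite dvdn_mull // add0n.
rewrite big_nat_cond big1 ?addr0 // => r /andP[/andP[r_gt0 r_lt]].
by rewrite dvdn_addl ?dvdn_mull // gtnNdvd.
Qed.

Lemma sum_supp1 (R : nmodType) (I : finType) (a : I) (F : I -> R) :
  (forall i, i != a -> F i = 0) -> \sum_i F i = F a.
Proof. by move=> F0; rewrite (bigD1 a) //= big1 ?addr0. Qed.
Arguments sum_supp1 {R I} a {F}.

Lemma big_pair (R : nmodType) (I J : finType) (F : I * J -> R) :
  \sum_t F t = \sum_i \sum_j F (i, j).
Proof. by rewrite pair_bigA; apply: eq_bigr => -[]. Qed.

Lemma big_triple (R : nmodType) (I J L : finType) (F : I * J * L -> R) :
  \sum_t F t = \sum_i \sum_j \sum_k F (i, j, k).
Proof. by rewrite !big_pair. Qed.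

Lemma big_distr3 (R : pzSemiRingType) (I J L : finType) (f : I -> R) (g : J -> R)
    (h : L -> R) :
  (\sum_i f i) * (\sum_j g j) * (\sum_k h k) = \sum_i \sum_j \sum_k f i * g j * h k.
Proof.
rewrite big_distrlr mulr_suml; apply: eq_bigr => i _.
by rewrite mulr_suml; apply: eq_bigr => j _; rewrite mulr_sumr.
Qed.

Lemma prod_ffun_eq (R : comPzSemiRingType) (I : finType) (T : eqType) (f g : {ffun I -> T}) :
  \prod_i (f i == g i)%:R = (f == g)%:R :> R.
Proof.
have [->|f_neq_g] := eqVneq f g; first by apply: big1 => i _; rewrite eqxx.
have [i /negbTE fgi] : exists i, f i != g i.
  apply/existsP; move: f_neq_g; apply: contraR => /existsPn fg.
  by apply/eqP/ffunP => i; apply/eqP/negPn.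
by rewrite (bigD1 i) //= fgi mul0r.
Qed.
Arguments prod_ffun_eq {R I T} f g.

Section Fourier.
Variables (n m : nat) (q : algC) (a : 'I_m -> 'I_m -> 'I_(n ^ 2)).
Hypotheses (n_ge2 : (2 <= n)%N) (q_prim : (n ^ 2).-primitive_root q).

Local Notation K := (n ^ 2)%N.
Local Notation G := (Grp m n).

Lemma n_gt0 : (0 < n)%N. Proof. exact: leq_trans n_ge2. Qed.

Lemma K_gt1 : (1 < K)%N.
Proof. by rewrite (leq_trans n_ge2) // -{1}(expn1 n) leq_pexp2l ?n_gt0. Qed.

Lemma Zp_K : (Zp_trunc K).+2 = K. Proof. exact: Zp_cast K_gt1. Qed.

Lemma val_ZpD (x y : 'Z_K) : nat_of_ord (x + y) = ((x + y) %% K)%N.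
Proof. by rewrite /=; set k := (_ + _)%N; clearbody k; rewrite Zp_K. Qed.

Lemma val_Zp_lt (x : 'Z_K) : (x < K)%N.
Proof. by rewrite -[X in (_ < X)%N]Zp_K ltn_ord. Qed.

Lemma qK : q ^+ K = 1. Proof. exact: prim_expr_order q_prim. Qed.

Lemma q_neq0 : q != 0.
Proof.
by apply: contra_eq_neq qK => ->; rewrite expr0n gtn_eqF ?(ltnW K_gt1) // eq_sym oner_neq0.
Qed.

Lemma expr_modK k : q ^+ (k %% K) = q ^+ k. Proof. exact: expr_mod qK. Qed.

Lemma expr_mulK k : q ^+ (k * K) = 1. Proof. by rewrite exprM exprAC qK expr1n. Qed.

Lemma Km_neq0 : (K ^ m)%:R != 0 :> algC.
Proof. by rewrite pnatr_eq0 -lt0n expn_gt0 ltnW ?K_gt1. Qed.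

Definition chi (b g : G) : algC := \prod_(i < m) q ^+ (b i * g i).

Lemma chiC b g : chi b g = chi g b.
Proof. by apply: eq_bigr => i _; rewrite mulnC. Qed.

Lemma chi0 b : chi b 0 = 1.
Proof. by apply: big1 => i _; rewrite ffunE muln0 expr0. Qed.

Lemma chiD b g h : chi b (g + h) = chi b g * chi b h.
Proof.
rewrite /chi -big_split; apply: eq_bigr => i _ /=.
by rewrite ffunE val_ZpD -expr_modK modnMmr expr_modK mulnDr exprD.
Qed.

Lemma chi_neq0 b g : chi b g != 0.
Proof. by rewrite prodf_seq_neq0; apply/allP => i _; rewrite expf_neq0 ?q_neq0. Qed.

Lemma chiN b g : chi b (- g) = (chi b g)^-1.
Proof. by apply: (mulIf (chi_neq0 b g)); rewrite -chiD addNr chi0 mulVf ?chi_neq0. Qed.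

Lemma sum_chi b : \sum_g chi b g = (b == 0)%:R * (K ^ m)%:R.
Proof.
have sum_coord (x : 'Z_K) : \sum_(y : 'Z_K) q ^+ (x * y) = (x == 0)%:R * K%:R.
  rewrite (eq_bigr (fun y : 'Z_K => (q ^+ x) ^+ y)) => [|y _]; last by rewrite exprM.
  rewrite sum_expr_unity //; last by rewrite -exprM mulnC exprM [X in q ^+ X]Zp_K qK expr1n.
  rewrite [X in X%:R]Zp_K -(prim_order_dvd q_prim) /dvdn modn_small ?val_Zp_lt //.
  by rewrite -[x == 0]val_eqE /=; case: (_ == _); rewrite ?mul1r ?mul0r.
rewrite /chi -(bigA_distr_bigA (fun i (x : 'Z_K) => q ^+ (b i * x))) /=.
under eq_bigr do rewrite sum_coord.
rewrite big_split prodr_const card_ord -natrX -(prod_ffun_eq b 0).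
by congr (_ * _); apply: eq_bigr => i _; rewrite ffunE.
Qed.

Lemma sum_chi_conj s t : \sum_b chi b s / chi b t = (s == t)%:R * (K ^ m)%:R.
Proof.
under eq_bigr => b _ do rewrite -chiN -chiD chiC.
by rewrite sum_chi subr_eq0.
Qed.

Definition fourier (x : GA G) b := \sum_g x g * chi b g.

Definition fourier2 (x : GA (G * G)) b c := \sum_t x t * (chi b t.1 * chi c t.2).

Definition fourier3 (x : GA (G * G * G)) b c d :=
  \sum_t x t * (chi b t.1.1 * chi c t.1.2 * chi d t.2).

Lemma fourier2M x y b c : fourier2 (gmul2 x y) b c = fourier2 x b c * fourier2 y b c.
Proof.
rewrite /fourier2 mulr_suml; under eq_bigr do rewrite ffunE mulr_suml.
rewrite exchange_big; apply: eq_bigr => s _; rewrite mulr_sumr.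
rewrite (reindex_inj (addIr s)); apply: eq_bigr => -[t1 t2] _ /=.
rewrite !addrK !chiD; ring.
Qed.

Lemma fourier3M x y b c d :
  fourier3 (gmul3 x y) b c d = fourier3 x b c d * fourier3 y b c d.
Proof.
rewrite /fourier3 mulr_suml; under eq_bigr do rewrite ffunE mulr_suml.
rewrite exchange_big; apply: eq_bigr => s _; rewrite mulr_sumr.
rewrite (reindex_inj (addIr s)); apply: eq_bigr => -[[t1 t2] t3] _ /=.
rewrite !addrK !chiD; ring.
Qed.

Lemma fourier2_sum (I : finType) (x : I -> GA (G * G)) b c :
  fourier2 (\sum_i x i) b c = \sum_i fourier2 (x i) b c.
Proof.
by rewrite /fourier2 exchange_big; apply: eq_bigr => t _; rewrite sum_ffunE mulr_suml.
Qed.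

Lemma fourier3_sum (I : finType) (x : I -> GA (G * G * G)) b c d :
  fourier3 (\sum_i x i) b c d = \sum_i fourier3 (x i) b c d.
Proof.
by rewrite /fourier3 exchange_big; apply: eq_bigr => t _; rewrite sum_ffunE mulr_suml.
Qed.

Lemma fourier2Z k x b c : fourier2 (gscale k x) b c = k * fourier2 x b c.
Proof. by rewrite /fourier2 mulr_sumr; apply: eq_bigr => t _; rewrite ffunE -mulrA. Qed.

Lemma fourier3Z k x b c d : fourier3 (gscale k x) b c d = k * fourier3 x b c d.
Proof. by rewrite /fourier3 mulr_sumr; apply: eq_bigr => t _; rewrite ffunE -mulrA. Qed.

Lemma fourier2_tens x y b c : fourier2 (tens2 x y) b c = fourier x b * fourier y c.
Proof.
rewrite /fourier2 big_pair /fourier mulr_suml; apply: eq_bigr => g _.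
by rewrite mulr_sumr; apply: eq_bigr => h _; rewrite ffunE /=; ring.
Qed.

Lemma fourier3_tens x y z b c d :
  fourier3 (tens3 x y z) b c d = fourier x b * fourier y c * fourier z d.
Proof.
rewrite /fourier3 big_triple /fourier big_distr3.
by do 3!apply: eq_bigr => ? _; rewrite ffunE /=; ring.
Qed.

Lemma fourier2_one b c : fourier2 (gone2 m n) b c = 1.
Proof.
rewrite /fourier2 big_pair (sum_supp1 (0 : G)) => [|g g0]; last first.
  by apply: big1 => h _; rewrite ffunE /= (negbTE g0) mul0r.
rewrite (sum_supp1 (0 : G)) => [|h h0]; last by rewrite ffunE /= (negbTE h0) andbF mul0r.
by rewrite ffunE /= eqxx !chi0 !mulr1.
Qed.

Lemma fourier3_one_tens J b c d : fourier3 (one_tens J) b c d = fourier2 J c d.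
Proof.
rewrite /fourier3 big_triple (sum_supp1 (0 : G)) => [|g g0]; last first.
  by apply: big1 => h _; apply: big1 => k _; rewrite ffunE /= (negbTE g0) !mul0r.
rewrite /fourier2 big_pair; apply: eq_bigr => h _; apply: eq_bigr => k _.
by rewrite ffunE /= eqxx chi0 !mul1r.
Qed.

Lemma fourier3_tens_one J b c d : fourier3 (tens_one J) b c d = fourier2 J b c.
Proof.
rewrite /fourier3 big_triple /fourier2 big_pair; apply: eq_bigr => g _; apply: eq_bigr => h _.
rewrite (sum_supp1 (0 : G)) => [|k k0]; last by rewrite ffunE /= (negbTE k0) !mul0r.
by rewrite ffunE /= eqxx chi0 mul1r mulr1.
Qed.

Lemma fourier3_id_Delta J b c d : fourier3 (id_Delta J) b c d = fourier2 J b (c + d).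
Proof.
rewrite /fourier3 big_triple /fourier2 big_pair; apply: eq_bigr => g _; apply: eq_bigr => h _.
rewrite (sum_supp1 h) => [|k hk]; last by rewrite ffunE /= eq_sym (negbTE hk) !mul0r.
by rewrite ffunE /= eqxx mul1r (chiC (c + d)) chiD (chiC h c) (chiC h d) !mulrA.
Qed.

Lemma fourier3_Delta_id J b c d : fourier3 (Delta_id J) b c d = fourier2 J (b + c) d.
Proof.
rewrite /fourier3 big_triple /fourier2 big_pair; apply: eq_bigr => g _.
rewrite [LHS](sum_supp1 g) => [|h gh]; last first.
  by apply: big1 => k _; rewrite ffunE /= eq_sym (negbTE gh) !mul0r.
apply: eq_bigr => k _.
by rewrite ffunE /= eqxx mul1r (chiC (b + c)) chiD (chiC g b) (chiC g c).
Qed.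

Lemma fourier3_inversion x t :
  \sum_b \sum_c \sum_d fourier3 x b c d / (chi b t.1.1 * chi c t.1.2 * chi d t.2)
  = (K ^ m)%:R ^+ 3 * x t.
Proof.
have orth3 s : \sum_b \sum_c \sum_d
    chi b s.1.1 * chi c s.1.2 * chi d s.2 / (chi b t.1.1 * chi c t.1.2 * chi d t.2)
    = (s == t)%:R * (K ^ m)%:R ^+ 3.
  transitivity ((\sum_b chi b s.1.1 / chi b t.1.1) * (\sum_c chi c s.1.2 / chi c t.1.2)
                * (\sum_d chi d s.2 / chi d t.2)).
    by rewrite big_distr3; do 3!apply: eq_bigr => ? _; rewrite !invfM; ring.
  rewrite !sum_chi_conj.
  case: s t => [[s1 s2] s3] [[t1 t2] t3] /=; rewrite !xpair_eqE.
  by case: (s1 == t1); case: (s2 == t2); case: (s3 == t3); rewrite /=; ring.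
transitivity (\sum_s x s * ((s == t)%:R * (K ^ m)%:R ^+ 3)); last first.
  by rewrite (sum_supp1 t) => [|s /negbTE->]; rewrite ?mul0r ?mulr0 // eqxx mul1r mulrC.
symmetry; under eq_bigr => s _ do rewrite -orth3 mulr_sumr.
rewrite exchange_big; apply: eq_bigr => b _; under eq_bigr do rewrite mulr_sumr.
rewrite exchange_big; apply: eq_bigr => c _; under eq_bigr do rewrite mulr_sumr.
rewrite exchange_big; apply: eq_bigr => d _; rewrite /fourier3 mulr_suml.
by apply: eq_bigr => s _; rewrite mulrA.
Qed.

Lemma fourier3_inj x y :
  (forall b c d, fourier3 x b c d = fourier3 y b c d) -> x = y.
Proof.
move=> eq_xy; apply/ffunP => t; apply: (mulfI (expf_neq0 3 Km_neq0)).
by rewrite -!fourier3_inversion; do 3!apply: eq_bigr => ? _; rewrite eq_xy.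
Qed.

Lemma idemE b g : idem q b g = (K ^ m)%:R^-1 / chi b g.
Proof. by rewrite ffunE prodfV. Qed.

Lemma fourier_idem b' b : fourier (idem q b') b = (b' == b)%:R.
Proof.
rewrite /fourier (eq_bigr (fun g => (K ^ m)%:R^-1 * (chi g b / chi g b'))) => [|g _].
  by rewrite -mulr_sumr sum_chi_conj eq_sym mulrCA mulVf ?mulr1 ?Km_neq0.
by rewrite idemE (chiC g b) (chiC g b'); ring.
Qed.

Lemma fourier2_JJ b c : fourier2 (JJ q a) b c = Jcoef q a b c.
Proof.
rewrite /JJ fourier2_sum [LHS](sum_supp1 b) => [|b' b'b]; rewrite fourier2_sum.
  rewrite [LHS](sum_supp1 c) => [|c' c'c]; rewrite fourier2Z fourier2_tens !fourier_idem.
    by rewrite !eqxx !mulr1.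
  by rewrite (negbTE c'c) !mulr0.
by apply: big1 => c' _; rewrite fourier2Z fourier2_tens !fourier_idem (negbTE b'b) mul0r mulr0.
Qed.

Lemma fourier2_Jinv Jinv b c :
  gmul2 (JJ q a) Jinv = gone2 m n -> fourier2 Jinv b c = (Jcoef q a b c)^-1.
Proof.
move=> JJinv; have := fourier2M (JJ q a) Jinv b c.
rewrite JJinv fourier2_one fourier2_JJ => J_Jinv.
have J_neq0 : Jcoef q a b c != 0.
  by apply/eqP => J0; move: J_Jinv; rewrite J0 mul0r => /eqP; rewrite oner_eq0.
by rewrite -[LHS](mulKf J_neq0) -J_Jinv mulr1.
Qed.

Lemma cfunE z y : cfun n q z y = q ^- (z * (y %/ n * n))%N.
Proof. by rewrite /cfun {1}(divn_eq y n) addnK. Qed.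

Lemma cfun_neq0 z y : cfun n q z y != 0.
Proof. by rewrite cfunE invr_eq0 expf_neq0 ?q_neq0. Qed.

Lemma cfunDl z1 z2 y : cfun n q (z1 + z2) y = cfun n q z1 y * cfun n q z2 y.
Proof. by rewrite !cfunE mulnDl exprD invfM. Qed.

Lemma cfun_modl z y : cfun n q (z %% K) y = cfun n q z y.
Proof. by rewrite !cfunE -expr_modK modnMml expr_modK. Qed.

Lemma cfun_modr z y : cfun n q z (y %% K) = cfun n q z y.
Proof.
have split_quot : (y %/ n * n = (y %% K) %/ n * n + y %/ K * K)%N.
  by rewrite {1}(divn_eq y K) -mulnn mulnA divnMDl ?n_gt0 // mulnDl addnC.
by rewrite !cfunE [in RHS]split_quot mulnDr exprD [(z * (_ * K))%N]mulnA expr_mulK mulr1.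
Qed.

Lemma cfunDr z y1 y2 :
  cfun n q z (y1 + y2)
  = cfun n q z y1 * cfun n q z y2 * q ^- (z %% n * ((y1 %% n + y2 %% n) %/ n * n))%N.
Proof.
have carry : ((y1 + y2) %/ n * n
              = y1 %/ n * n + y2 %/ n * n + (y1 %% n + y2 %% n) %/ n * n)%N.
  by rewrite {1}(divn_eq y1 n) {1}(divn_eq y2 n) addnACA -mulnDl divnMDl ?n_gt0 // !mulnDl.
have high k : q ^+ (z * (k * n))%N = q ^+ (z %% n * (k * n))%N.
  rewrite {1}(divn_eq z n) mulnDl exprD.
  rewrite [X in q ^+ X](_ : _ = z %/ n * k * K)%N ?expr_mulK ?mul1r //.
  by rewrite -mulnn; ring.
by rewrite !cfunE carry !mulnDr !exprD !invfM (high ((y1 %% n + y2 %% n) %/ n)%N).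
Qed.

Lemma cfun_cocycle b c c' d :
  cfun n q c d * cfun n q b ((c' + d) %% K) / cfun n q ((b + c) %% K) d / cfun n q b c'
  = q ^- (b %% n * ((c' %% n + d %% n) %/ n * n))%N.
Proof.
rewrite cfun_modr cfun_modl cfunDr cfunDl.
by field; rewrite !cfun_neq0 expf_neq0 ?q_neq0.
Qed.

Definition resn (b : G) : {ffun 'I_m -> 'I_n} :=
  [ffun i => Ordinal (ltn_pmod (b i) n_gt0)].

Lemma Jcoef_cocycle b c d :
  Jcoef q a c d * Jcoef q a b (c + d) / Jcoef q a (b + c) d / Jcoef q a b c
  = PhiCoef q a (resn b) (resn c) (resn d).
Proof.
rewrite /Jcoef /PhiCoef -!prodfV -!big_split; apply: eq_bigr => i _ /=.
rewrite -!prodfV -!big_split; apply: eq_bigr => j _ /=.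
rewrite !ffunE !val_ZpD -!exprVn -!exprMn cfun_cocycle /=.
set x := (c j %% n)%N; set y := (d j %% n)%N.
have carry : ((x + y) %% n)%:Z - x%:Z - y%:Z = - ((x + y) %/ n * n)%N%:Z.
  have := congr1 Posz (divn_eq (x + y) n); rewrite !PoszD !PoszM; lia.
by rewrite carry mulrN -!PoszM exprVn -exprM exprnN mulnC mulnA.
Qed.

Lemma sum_Zp_dvdn_expr (w : algC) : w ^+ K = 1 ->
  \sum_(x : 'Z_K) (n %| x)%N%:R * w ^+ x = (w ^+ n == 1)%:R * n%:R.
Proof.
move=> wK; rewrite (eq_bigr (fun x : 'Z_K => if (n %| x)%N then w ^+ x else 0)) => [|x _].
  rewrite -big_mkcond -(big_mkord (fun x => n %| x)%N (fun x => w ^+ x)) Zp_K -mulnn.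
  rewrite big_nat_dvdn ?n_gt0 //.
  under eq_bigr do rewrite mulnC exprM.
  rewrite big_mkord sum_expr_unity ?n_gt0 //; last by rewrite -exprM mulnn.
  by case: eqP; rewrite ?mul1r ?mul0r.
by case: ifP; rewrite ?mul1r ?mul0r.
Qed.

Lemma fourier_sidem b' b : fourier (sidem q b') b = (b' == resn b)%:R.
Proof.
have coord (u v : nat) : (u < n)%N ->
    \sum_(x : 'Z_K) (n %| x)%N%:R * (q ^- (u * x) * q ^+ (v * x))
    = (u == v %% n)%N%:R * n%:R.
  move=> u_lt_n; have qun_neq0 : q ^+ (u * n) != 0 by rewrite expf_neq0 ?q_neq0.
  rewrite (eq_bigr (fun x : 'Z_K => (n %| x)%N%:R * (q ^+ v / q ^+ u) ^+ x)); last first.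
    by move=> x _; rewrite exprMn exprVn -!exprM (mulrC (q ^+ _)).
  rewrite sum_Zp_dvdn_expr; last by rewrite exprMn exprVn -!exprM !expr_mulK invr1 mulr1.
  rewrite exprMn exprVn -!exprM -(inj_eq (mulIf qun_neq0)) mul1r divfK //.
  rewrite (eq_prim_root_expr q_prim) -mulnn -!muln_modl ?n_gt0 // eqn_pmul2r ?n_gt0 //.
  by rewrite (modn_small u_lt_n) eq_sym.
have term g : sidem q b' g * chi b g = (n ^ m)%:R^-1 *
    \prod_i ((n %| g i)%N%:R * (q ^- (b' i * g i) * q ^+ (b i * g i))).
  rewrite ffunE /chi !big_split /=.
  case: ifP => [/forallP g_dvd | /negbT/forallPn[i /negbTE g_ndvd]].
    have -> : \prod_i (n %| g i)%N%:R = 1 :> algC by apply: big1 => i _; rewrite g_dvd.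
    by rewrite mul1r mulrA.
  have -> : \prod_i (n %| g i)%N%:R = 0 :> algC by rewrite (bigD1 i) //= g_ndvd mul0r.
  by rewrite !mul0r mulr0.
rewrite /fourier; under eq_bigr do rewrite term.
rewrite -mulr_sumr -(bigA_distr_bigA (fun i (x : 'Z_K) =>
  (n %| x)%N%:R * (q ^- (b' i * x) * q ^+ (b i * x)))) /=.
under eq_bigr => i _ do rewrite (coord _ _ (ltn_ord (b' i))).
rewrite big_split /= prodr_const card_ord -natrX mulrCA mulVf ?mulr1; last first.
  by rewrite pnatr_eq0 -lt0n expn_gt0 n_gt0.
by rewrite -prod_ffun_eq; apply: eq_bigr => i _; rewrite ffunE.
Qed.

Lemma fourier3_Phi Jinv b c d : gmul2 (JJ q a) Jinv = gone2 m n ->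
  fourier3 (Phi q a Jinv) b c d = PhiCoef q a (resn b) (resn c) (resn d).
Proof.
move=> JJinv; rewrite /Phi !fourier3M fourier3_one_tens fourier3_id_Delta.
rewrite fourier3_Delta_id fourier3_tens_one !fourier2_JJ !(fourier2_Jinv _ _ JJinv).
exact: Jcoef_cocycle.
Qed.

Definition Phi_closed_form : GA (G * G * G) :=
  \sum_(b : {ffun 'I_m -> 'I_n}) \sum_(c : {ffun 'I_m -> 'I_n}) \sum_(d : {ffun 'I_m -> 'I_n})
    gscale (PhiCoef q a b c d) (tens3 (sidem q b) (sidem q c) (sidem q d)).

Lemma fourier3_Phi_closed_form b c d :
  fourier3 Phi_closed_form b c d = PhiCoef q a (resn b) (resn c) (resn d).
Proof.
have term b' c' d' : fourier3 (gscale (PhiCoef q a b' c' d')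
                        (tens3 (sidem q b') (sidem q c') (sidem q d'))) b c d
    = PhiCoef q a b' c' d' * ((b' == resn b)%:R * (c' == resn c)%:R * (d' == resn d)%:R).
  by rewrite fourier3Z fourier3_tens !fourier_sidem.
rewrite fourier3_sum [LHS](sum_supp1 (resn b)) => [|b' /negbTE b'b]; last first.
  rewrite fourier3_sum big1 // => c' _; rewrite fourier3_sum big1 // => d' _.
  by rewrite term b'b !mul0r mulr0.
rewrite fourier3_sum [LHS](sum_supp1 (resn c)) => [|c' /negbTE c'c]; last first.
  by rewrite fourier3_sum big1 // => d' _; rewrite term c'c mulr0 mul0r mulr0.
rewrite fourier3_sum [LHS](sum_supp1 (resn d)) => [|d' /negbTE d'd].
  by rewrite term !eqxx !mulr1.
by rewrite term d'd !mulr0.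
Qed.

Lemma Phi_closed_form_supp t : Phi_closed_form t != 0 -> inA3 t.
Proof.
have sidem_eq0 i (g : G) : ~~ (n %| g i)%N -> forall b, sidem q b g = 0.
  by move=> g_ndvd b; rewrite ffunE ifN //; apply/forallP => /(_ i); apply/negP.
apply: contraR => /forallPn[i]; rewrite !negb_and => t_ndvd.
rewrite !sum_ffunE; apply/eqP/big1 => b _; rewrite sum_ffunE big1 // => c _.
rewrite sum_ffunE big1 // => d _; rewrite ffunE [X in _ * X]ffunE /=.
by case/orP: t_ndvd => [/orP[]|] /sidem_eq0 ->; rewrite !(mul0r, mulr0).
Qed.
End Fourier.

Theorem lemma4p2 (n m : nat) (q : algC) (a : 'I_m -> 'I_m -> 'I_(n ^ 2))
    (Jinv : GA (Grp m n * Grp m n)%type) :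
  (2 <= n)%N -> (1 <= m)%N -> primitive_root_of_unity (n ^ 2) q ->
  gmul2 (JJ q a) Jinv = gone2 m n -> gmul2 Jinv (JJ q a) = gone2 m n ->
  Phi q a Jinv =
    \sum_(b : {ffun 'I_m -> 'I_n}) \sum_(c : {ffun 'I_m -> 'I_n})
      \sum_(d : {ffun 'I_m -> 'I_n})
        gscale (PhiCoef q a b c d)
          (tens3 (sidem q b) (sidem q c) (sidem q d))
  /\ (forall t, Phi q a Jinv t != 0 -> inA3 t).
Proof.
move=> n_ge2 _ q_prim JJinv _.
have Phi_eq : Phi q a Jinv = Phi_closed_form q a.
  apply: (fourier3_inj n_ge2 q_prim) => b c d.
  by rewrite (fourier3_Phi n_ge2 q_prim _ _ _ JJinv) (fourier3_Phi_closed_form _ n_ge2 q_prim).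
by split=> // t; rewrite Phi_eq; apply: Phi_closed_form_supp.
Qed.
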